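(* Let $p\ge1$, $X=\{0,1,\dots,p\}$, and for $i\in\{1,\dots,p\}$ let $e_i$ be the transformation of $X^\ast$ defined recursively (with $\emptyset\mapsto\emptyset$) by $e_i(0w)=i\,e_i(w)$, $e_i(iw)=0w$, $e_i(jw)=jw$ for $j\notin\{0,i\}$. For $n\ge1$ let $A_n=\sum_{i=1}^p\bigl(M^{(n)}_i+(M^{(n)}_i)^{-1}\bigr)$, where $M^{(n)}_i$ is the $(p+1)^n\times(p+1)^n$ permutation matrix of the action of $e_i$ on $X^n$, and let $P_n(\lambda)=\det(\lambda I-A_n)$. Then for every $n\ge1$ $$P_{n+1}(\lambda)=\bigl(\lambda-2(p-1)\bigr)^{(p-1)(p+1)^n}\,P_n(f_p(\lambda)),\qquad f_p(\lambda)=\lambda^2-2(p-1)\lambda-2p,$$ and $P_1(\lambda)=(\lambda-2p)(\lambda+2)(\lambda-2(p-1))^{p-1}$.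
   Context: The group generated by $e_1,\dots,e_p$ is the star automaton group $\mathcal G_{S_p}$; $A_n$ is the adjacency matrix of its $n$-th Schreier graph $\Gamma^p_n$ (vertex set $X^n$, an edge joining $v$ and $e_i(v)$ for each $v$ and $i$, loops counted twice on the diagonal). *)

From mathcomp Require Import all_boot all_order all_algebra.
Set Implicit Arguments. Unset Strict Implicit. Unset Printing Implicit Defensive.
Import GRing.Theory.
Local Open Scope ring_scope.

(* Alphabet X = {0,...,p} is 'I_p.+1; the letter 0 is ord0.
   e_seq i : the transformation e_i of X^* (intended for 1 <= i <= p). *)
Fixpoint e_seq (p : nat) (i : 'I_p.+1) (w : seq 'I_p.+1) : seq 'I_p.+1 :=
  match w with
  | [::] => [::]
  | a :: w' =>
      if a == ord0 then i :: e_seq i w'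
      else if a == i then ord0 :: w'
      else a :: w'
  end.

Lemma size_e_seq p (i : 'I_p.+1) w : size (e_seq i w) = size w.
Proof. elim: w => [|a w IH] //=; case: ifP => _ /=; [by rewrite IH|by case: ifP]. Qed.

Lemma e_tuple_proof p n (i : 'I_p.+1) (t : n.-tuple 'I_p.+1) :
  size (e_seq i t) == n.
Proof. by rewrite size_e_seq size_tuple. Qed.

Definition e_tuple p n (i : 'I_p.+1) (t : n.-tuple 'I_p.+1) : n.-tuple 'I_p.+1 :=
  Tuple (e_tuple_proof i t).

(* Vertex set X^n, indexed by 'I_#|X^n| through the canonical enumeration. *)
Notation Nwords p n := #|{: n.-tuple 'I_p.+1}|.

Definition Mperm p n (i : 'I_p.+1) : 'M[int]_(Nwords p n) :=
  \matrix_(a, b) ((enum_val a == e_tuple i (enum_val b))%:R : int).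

Definition Amat p n : 'M[int]_(Nwords p n) :=
  \sum_(i < p.+1 | (0 < i)%N) (Mperm n i + invmx (Mperm n i)).

Definition Ppoly p n : {poly int} := char_poly (Amat p n).

Definition fp (p : nat) : {poly int} :=
  'X^2 - ((2 * (p - 1))%:R : int) *: 'X - ((2 * p)%:R : int)%:P.

From mathcomp Require Import all_boot all_algebra perm ring.
Import GRing.Theory.
Local Open Scope ring_scope.

(** Order the words of length n+1 by first letter: first the block 0X^n, then
   the blocks iX^n, 1 <= i <= p.  No edge joins two words of 0X^n (every e_i
   changes the first letter 0 into i), no edge joins iX^n to jX^n for i <> j,
   and inside iX^n the only edges are the p-1 loops of the e_k, k <> i, so
   A_(n+1) = [[0, B^T], [B, 2(p-1) I]], where B records the edges
   0w -- ie_i(w) and iw -- 0w.  A direct count gives B^T B = 2p I + A_n,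
   and the Schur complement of the scalar block yields
   P_(n+1)(x) (x - 2(p-1))^N = P_n(x(x - 2(p-1)) - 2p) (x - 2(p-1))^(pN)
   with N = (p+1)^n.  The case n = 0 gives P_1, since A_0 = (2p). *)

Lemma sum_enum_val_eq (R : pzSemiRingType) (T : finType) (s t : T) :
  \sum_(k < #|{: T}|) ((enum_val k == s)%:R * (enum_val k == t)%:R : R)
  = (s == t)%:R.
Proof.
rewrite (bigD1 (enum_rank s)) //= enum_rankK eqxx mul1r big1 ?addr0 // => k.
by rewrite -(inj_eq enum_val_inj) enum_rankK => /negbTE ->; rewrite mul0r.
Qed.

Lemma char_poly_reindex {R : comNzRingType} {m n : nat} (e : m = n)
  (f : 'I_m -> 'I_n) (A : 'M[R]_n) : injective f ->
  char_poly (\matrix_(i, j) A (f i) (f j)) = char_poly A.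
Proof.
case: n / e in f A *; move=> finj; pose s := perm finj; rewrite /char_poly.
have -> : char_poly_mx (\matrix_(i, j) A (f i) (f j)) =
          row_perm s (col_perm s (char_poly_mx A)).
  by apply/matrixP => i j; rewrite !mxE !permE (inj_eq finj).
rewrite row_permE col_permE !det_mulmx !det_perm odd_permV.
by rewrite mulrCA -expr2 sqrr_sign mulr1.
Qed.

Lemma det_scalar_block_mx (R : comNzRingType) m n (x a : R) (B : 'M[R]_(n, m)) :
  \det (block_mx x%:M (- B^T) (- B) a%:M) * a ^+ m
  = \det ((x * a)%:M - B^T *m B) * a ^+ n.
Proof.
have -> : a ^+ m = \det (block_mx (a%:M : 'M_m) 0 B 1%:M).
  by rewrite det_lblock det_scalar det1 mulr1.
rewrite -det_mulmx mulmx_block !mulmx0 !mulmx1 !add0r mulNmx mul_scalar_mx.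
rewrite mul_mx_scalar mul_scalar_mx scalerN addNr.
by rewrite det_ublock det_scalar scale_scalar_mx.
Qed.

Lemma char_poly_comp (R : comNzRingType) n (A : 'M[R]_n) q :
  char_poly A \Po q = \det (q%:M - map_mx polyC A).
Proof.
rewrite /char_poly -det_map_mx; congr (\det _); apply/matrixP => i j.
by rewrite !mxE rmorphB rmorphMn /= comp_polyX comp_polyC.
Qed.

Lemma char_poly_shift (R : comNzRingType) n (a : R) (A : 'M[R]_n) q :
  char_poly (a%:M + A) \Po q = char_poly A \Po (q - a%:P).
Proof.
by rewrite !char_poly_comp map_mxD map_scalar_mx opprD addrA raddfB.
Qed.

Lemma char_poly_scalar_block (R : comNzRingType) m n (c : R) (B : 'M[R]_(n, m)) :
  char_poly (block_mx 0 B^T B c%:M) * ('X - c%:P) ^+ m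
  = (char_poly (B^T *m B) \Po ('X * ('X - c%:P))) * ('X - c%:P) ^+ n.
Proof.
set B' := map_mx polyC B.
rewrite {1}/char_poly.
have -> : char_poly_mx (block_mx 0 B^T B c%:M)
          = block_mx 'X%:M (- B'^T) (- B') ('X - c%:P)%:M.
  rewrite /char_poly_mx map_block_mx {1}(scalar_mx_block m n) opp_block_mx.
  by rewrite add_block_mx map_mx0 map_scalar_mx oppr0 addr0 -raddfB !sub0r map_trmx.
by rewrite det_scalar_block_mx char_poly_comp map_mxM map_trmx.
Qed.

Fixpoint e_inv {p : nat} (i : 'I_p.+1) (w : seq 'I_p.+1) : seq 'I_p.+1 :=
  match w with
  | [::] => [::]
  | a :: w' =>
      if a == i then ord0 :: e_inv i w'
      else if a == ord0 then i :: w'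
      else a :: w'
  end.

Lemma e_seqK p (i : 'I_p.+1) : cancel (e_seq i) (e_inv i).
Proof.
elim=> [|a w IH] //=.
have [->|a0] := eqVneq a ord0; first by rewrite /= eqxx IH.
have [<-|ai] := eqVneq a i; first by rewrite /= eq_sym (negbTE a0).
by rewrite /= (negbTE ai) (negbTE a0).
Qed.

Lemma e_tuple_inj p n (i : 'I_p.+1) : injective (@e_tuple p n i).
Proof. by move=> u v /(congr1 val) /(can_inj (@e_seqK p i)) /val_inj. Qed.

Lemma trMperm_mul p n (i : 'I_p.+1) : (Mperm n i)^T *m Mperm n i = 1%:M.
Proof.
apply/matrixP=> a b; rewrite !mxE.
under eq_bigr do rewrite !mxE.
by rewrite sum_enum_val_eq (inj_eq (@e_tuple_inj _ _ _)) (inj_eq enum_val_inj).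
Qed.

Lemma invmx_Mperm p n (i : 'I_p.+1) : invmx (Mperm n i) = (Mperm n i)^T.
Proof.
have [_ Munit] := mulmx1_unit (trMperm_mul p n i).
by rewrite -[LHS]mul1mx -(trMperm_mul p n i) -mulmxA mulmxV // mulmx1.
Qed.

Definition edge_mult {p} (u v : seq 'I_p.+1) : int :=
  \sum_(j < p) ((u == e_seq (lift ord0 j) v)%:R + (v == e_seq (lift ord0 j) u)%:R).

Lemma AmatE p n a b : Amat p n a b = edge_mult (enum_val a : seq _) (enum_val b).
Proof.
rewrite /Amat summxE big_mkcond big_ord_recl /= add0r.
by apply: eq_bigr => j _; rewrite invmx_Mperm !mxE.
Qed.

Section EdgesByFirstLetter.
Variable p : nat.
Local Notation x j := (lift (ord0 : 'I_p.+1) j).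

Lemma lift0_eq0 (j : 'I_p) : (x j == ord0) = false.
Proof. by rewrite eq_sym (negbTE (neq_lift _ _)). Qed.

Lemma edge_multC (u v : seq 'I_p.+1) : edge_mult u v = edge_mult v u.
Proof. by apply: eq_bigr => j _; rewrite addrC. Qed.

Lemma edge_mult00 (u v : seq 'I_p.+1) : edge_mult (ord0 :: u) (ord0 :: v) = 0.
Proof. by apply: big1 => j _ /=; rewrite addr0. Qed.

Lemma edge_mult_lift0 (j : 'I_p) (u v : seq 'I_p.+1) :
  edge_mult (x j :: u) (ord0 :: v) = (u == e_seq (x j) v)%:R + (v == u)%:R.
Proof.
rewrite /edge_mult (bigD1 j) //= big1 => [|k kj] /=.
  by rewrite !eqseq_cons !eqxx /= addr0.
by rewrite !eqseq_cons !(inj_eq lift_inj) (eq_sym j) (negbTE kj) /= addr0.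
Qed.

Lemma loop_count (a b : 'I_p) (s t : seq 'I_p.+1) :
  \sum_(l < p) ((x a :: s == e_seq (x l) (x b :: t))%:R : int)
  = ((a == b) && (s == t))%:R * (p - 1)%:R.
Proof.
rewrite (bigD1 b) //= eqxx eqseq_cons lift0_eq0 add0r.
rewrite (eq_bigr (fun _ => ((a == b) && (s == t))%:R)) => [|l lb]; last first.
  by rewrite (inj_eq lift_inj) (eq_sym b) (negbTE lb) eqseq_cons (inj_eq lift_inj).
rewrite sumr_const mulr_natr; congr (_ *+ _).
by rewrite subn1 -[in RHS](card_ord p) -(cardC1 b); apply: eq_card.
Qed.

Lemma edge_mult_lift (j k : 'I_p) (u v : seq 'I_p.+1) :
  edge_mult (x j :: u) (x k :: v) = ((j == k) && (u == v))%:R * (2 * (p - 1))%:R.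
Proof.
rewrite /edge_mult big_split /= !loop_count (eq_sym k) (eq_sym v) -mulrDr.
by rewrite -natrD mul2n addnn.
Qed.

End EdgesByFirstLetter.

Section BlockDecomposition.
Variables p n : nat.
Local Notation T := (n.-tuple 'I_p.+1).
Local Notation N := #|{: T}|.
Local Notation w k := (enum_val k : T).
Local Notation x j := (lift (ord0 : 'I_p.+1) j).

Lemma card_pair_index : (p * N)%N = #|{: 'I_p * 'I_N}|.
Proof. by rewrite card_prod !card_ord. Qed.

Definition pair_of (r : 'I_(p * N)) : 'I_p * 'I_N :=
  enum_val (cast_ord card_pair_index r).
Definition index_of_pair (jk : 'I_p * 'I_N) : 'I_(p * N) :=
  cast_ord (esym card_pair_index) (enum_rank jk).

Lemma pair_ofK : cancel pair_of index_of_pair.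
Proof. by move=> r; rewrite /pair_of /index_of_pair enum_valK cast_ordK. Qed.

Lemma index_of_pairK : cancel index_of_pair pair_of.
Proof. by move=> jk; rewrite /pair_of /index_of_pair cast_ordKV enum_rankK. Qed.

Definition block_word (r : 'I_(N + p * N)) : n.+1.-tuple 'I_p.+1 :=
  match split r with
  | inl k => cons_tuple ord0 (w k)
  | inr r => cons_tuple (x (pair_of r).1) (w (pair_of r).2)
  end.

Lemma block_word_inj : injective block_word.
Proof.
move=> r s; rewrite /block_word -[r]splitK -[s]splitK !unsplitK.
case: (split r) (split s) => [k|r'] [l|s'] /(congr1 val) /eqP /=;
  rewrite eqseq_cons ?lift0_eq0 // eq_sym ?lift0_eq0 // => /andP[/eqP j_eq].
- by move=> /eqP /val_inj /enum_val_inj ->.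
move=> /eqP /val_inj /enum_val_inj k_eq; congr (unsplit (inr _)).
by rewrite -[r']pair_ofK -[s']pair_ofK [pair_of r']surjective_pairing
  [pair_of s']surjective_pairing (lift_inj j_eq) k_eq.
Qed.

Lemma card_block_index : (N + p * N)%N = #|{: n.+1.-tuple 'I_p.+1}|.
Proof. by rewrite !card_tuple card_ord expnS mulSn. Qed.

Definition Ablock : 'M[int]_(N + p * N) :=
  \matrix_(r, s) Amat p n.+1 (enum_rank (block_word r)) (enum_rank (block_word s)).

Definition Bentry (j : 'I_p) (k b : 'I_N) : int :=
  (w k == e_tuple (x j) (w b))%:R + (w k == w b)%:R.

Definition Bmx : 'M[int]_(p * N, N) :=
  \matrix_(r, b) Bentry (pair_of r).1 (pair_of r).2 b.

Lemma Ablock_block_mx : Ablock = block_mx 0 Bmx^T Bmx ((2 * (p - 1))%:R)%:M.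
Proof.
apply/matrixP => r s; rewrite mxE AmatE !enum_rankK /block_word.
rewrite -[r]splitK -[s]splitK !unsplitK.
case: (split r) (split s) => [k|r'] [l|s'].
- by rewrite block_mxEul mxE edge_mult00.
- by rewrite block_mxEur !mxE edge_multC edge_mult_lift0 (eq_sym (val (w k))).
- by rewrite block_mxEdl !mxE edge_mult_lift0 (eq_sym (val (w l))).
rewrite block_mxEdr !mxE edge_mult_lift -(inj_eq (can_inj pair_ofK)).
rewrite [pair_of r']surjective_pairing [pair_of s']surjective_pairing xpair_eqE /=.
by rewrite (inj_eq val_inj) (inj_eq enum_val_inj) mulr_natl.
Qed.

Lemma trBmx_mul : Bmx^T *m Bmx = ((2 * p)%:R : int)%:M + Amat p n.
Proof.
apply/matrixP => a b; rewrite !mxE AmatE.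
rewrite (reindex index_of_pair) /=; last first.
  by exists pair_of => r _; rewrite ?pair_ofK ?index_of_pairK.
under eq_bigr do rewrite !mxE index_of_pairK.
rewrite -(pair_bigA _ (fun j k => Bentry j k a * Bentry j k b)) /=.
have inner j : \sum_(k < N) Bentry j k a * Bentry j k b
    = ((w a == e_tuple (x j) (w b))%:R + (w b == e_tuple (x j) (w a))%:R)
      + (a == b)%:R *+ 2.
  under eq_bigr do rewrite /Bentry mulrDl !mulrDr.
  rewrite !big_split /= !sum_enum_val_eq (inj_eq (@e_tuple_inj _ _ _)).
  by rewrite (inj_eq enum_val_inj) (eq_sym (e_tuple _ _)); ring.
rewrite (eq_bigr _ (fun j _ => inner j)) big_split /= sumr_const card_ord addrC.
rewrite -mulrnA mul2n; congr (_ + _) => //.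
by case: (a == b); rewrite ?mul0rn ?mulr0n.
Qed.

Lemma char_poly_Ablock : char_poly Ablock = Ppoly p n.+1.
Proof.
apply: (char_poly_reindex card_block_index (fun r => enum_rank (block_word r))).
by move=> r s /enum_rank_inj /block_word_inj.
Qed.

End BlockDecomposition.

Lemma fpE p : fp p = 'X * ('X - ((2 * (p - 1))%:R : int)%:P) - ((2 * p)%:R : int)%:P.
Proof. by rewrite /fp -mul_polyC; ring. Qed.

Lemma PpolyS p n : (0 < p)%N ->
  Ppoly p n.+1 = ('X - ((2 * (p - 1))%:R : int)%:P) ^+ ((p - 1) * (p + 1) ^ n)
                 * (Ppoly p n \Po fp p).
Proof.
move=> p_gt0; set a := 'X - _.
have -> : ((p + 1) ^ n)%N = #|{: n.-tuple 'I_p.+1}| by rewrite card_tuple card_ord addn1.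
have a_neq0 : a != 0 by rewrite polyXsubC_eq0.
apply: (mulIf (expf_neq0 #|{: n.-tuple 'I_p.+1}| a_neq0)).
rewrite -char_poly_Ablock Ablock_block_mx char_poly_scalar_block trBmx_mul.
rewrite char_poly_shift -fpE -/(Ppoly p n) mulrAC -exprD mulrC.
by congr (_ ^+ _ * _); rewrite -mulSnr subn1 prednK.
Qed.

Lemma Ppoly0 p : Ppoly p 0 = 'X - ((2 * p)%:R : int)%:P.
Proof.
have card1 : 1%N = #|{: 0.-tuple 'I_p.+1}| by rewrite card_tuple expn0.
pose f := fun _ : 'I_1 => enum_rank ([tuple] : 0.-tuple 'I_p.+1).
have f_inj : injective f by move=> i j _; rewrite !ord1.
rewrite /Ppoly -(char_poly_reindex card1 f _ f_inj) /char_poly det_mx11 !mxE AmatE.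
rewrite /f enum_rankK /edge_mult (eq_bigr (fun _ => 1 + 1)) // sumr_const card_ord.
by rewrite -mulr2n -mulrnA mul2n.
Qed.

Theorem theorem3p8 (p : nat) (hp : (1 <= p)%N) :
  (forall n : nat, (1 <= n)%N ->
     Ppoly p n.+1 =
       ('X - ((2 * (p - 1))%:R : int)%:P) ^+ ((p - 1) * (p + 1) ^ n)
       * (Ppoly p n \Po fp p))
  /\
  Ppoly p 1 =
    ('X - ((2 * p)%:R : int)%:P) * ('X + (2%:R : int)%:P)
    * ('X - ((2 * (p - 1))%:R : int)%:P) ^+ (p - 1).
Proof.
split=> [n _|]; first exact: PpolyS.
rewrite PpolyS // expn0 muln1 Ppoly0 mulrC; congr (_ * _).
rewrite comp_polyB comp_polyX comp_polyC fpE !polyC_natr.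
by case: p hp => // p _; rewrite subn1 /=; ring.
Qed.
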